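(* Let $\emptyset \neq \mathcal O \subseteq \{\cup,\cap,\overline{\phantom{c}},+,/\}$ and let $C$ be an $\mathcal O$-circuit. Then for every natural number $z \ge 2^{|C|}+1$ we have $z\in I(C)$ if and only if $2^{|C|}+1 \in I(C)$.
   Context: Natural numbers include $0$. For $A,B\subseteq\mathbb N$: $A\cup B$, $A\cap B$ are the usual operations, $\overline{A}=\mathbb N\setminus A$, $A+B=\{a+b: a\in A, b\in B\}$, $A\times B=\{a\cdot b: a\in A, b\in B\}$, and $A/B=\{c\in\mathbb N:\exists a\in A\ \exists b\in B\setminus\{0\}: a=c\cdot b\}$ (exact integer division without remainder or rounding). For $\emptyset\ne\mathcal O\subseteq\{\cup,\cap,\overline{\phantom{c}},+,\times,/\}$, an $\mathcal O$-circuit $C=(V,E,g_C,\alpha)$ is a finite acyclic directed multigraph with gate set $V\subseteq\mathbb N$, every gate having indegree $0$, $1$ or $2$, a designated output gate $g_C\in V$, and a labeling $\alpha$: gates of indegree $0$ (input gates) are labeled by natural numbers, gates of indegree $1$ are labeled $\overline{\phantom{c}}$ (allowed only if $\overline{\phantom{c}}\in\mathcal O$), and gates of indegree $2$ are labeled by an operation in $\mathcal O\setminus\{\overline{\phantom{c}}\}$. The result set $I(g)\subseteq\mathbb N$ is defined inductively: $I(g)=\{\alpha(g)\}$ for an input gate; $I(g)=\mathbb N\setminus I(p)$ for a complement gate with predecessor $p$; $I(g)=I(g_1)\,\sigma\,I(g_2)$ for a gate labeled $\sigma$ with predecessors $g_1\le g_2$ (a double edge from one gate gives $g_1=g_2$).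 $I(C)=I(g_C)$. A circuit is encoded as a bit string listing its gates in reverse topological order, each gate as the triple (gate name, label, list of predecessors), with all numbers (including input labels) in binary; $|C|$ denotes the length of this encoding. *)

From mathcomp Require Import all_boot.
Set Implicit Arguments. Unset Strict Implicit. Unset Printing Implicit Defensive.

Inductive op := Cup | Cap | Compl | Plus | Times | Div.

Definition op_code (o : op) : nat :=
  match o with Cup => 0 | Cap => 1 | Compl => 2 | Plus => 3 | Times => 4 | Div => 5 end.

Definition nset := nat -> Prop.

Definition bin_sem (o : op) (A B : nset) : nset :=
  match o with
  | Cup => fun c => A c \/ B c
  | Cap => fun c => A c /\ B c
  | Compl => fun _ => False (* never used: complement is unary *)
  | Plus => fun c => exists a b, A a /\ B b /\ c = a + b
  | Times => fun c => exists a b, A a /\ B b /\ c = a * b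
  | Div => fun c => exists a b, A a /\ B b /\ b <> 0 /\ a = c * b
  end.

Inductive label := Input of nat | Gate of op.

Record gate := mkGate { gname : nat; glabel : label; gpreds : seq nat }.

(** A circuit is given by its list of gates in reverse topological order
    (every predecessor of a gate occurs later in the list) and its output gate. *)
Record circuit := mkCircuit { cgates : seq gate; cout : nat }.

Fixpoint topo_ok (gs : seq gate) : bool :=
  match gs with
  | [::] => true
  | g :: rest => all (fun p => p \in map gname rest) (gpreds g) && topo_ok rest
  end.

Definition gate_ok (O : pred op) (g : gate) : bool :=
  match glabel g with
  | Input _ => gpreds g == [::]
  | Gate Compl => O Compl && (size (gpreds g) == 1)
  | Gate o => O o && (size (gpreds g) == 2)
  end.

Definition is_circuit (O : pred op) (C : circuit) : bool :=
  [&& uniq (map gname (cgates C)), cout C \in map gname (cgates C),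
      topo_ok (cgates C) & all (gate_ok O) (cgates C)].

Definition gate_sem (lab : label) (ps : seq nat) (v : nat -> nset) : nset :=
  match lab with
  | Input n => fun c => c = n
  | Gate Compl => fun c => ~ v (nth 0 ps 0) c
  | Gate o => let a := nth 0 ps 0 in let b := nth 0 ps 1 in
              bin_sem o (v (minn a b)) (v (maxn a b))
  end.

Fixpoint val (gs : seq gate) : nat -> nset :=
  match gs with
  | [::] => fun _ _ => False
  | g :: rest => fun x =>
      if x == gname g then gate_sem (glabel g) (gpreds g) (val rest) else val rest x
  end.

Definition I (C : circuit) : nset := val (cgates C) (cout C).

Inductive sym := B0 | B1 | Sep.

Fixpoint bin_aux (fuel n : nat) : seq sym :=
  match fuel with
  | 0 => [::]
  | f.+1 => if n < 2 then [:: if n == 0 then B0 else B1]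
            else rcons (bin_aux f n./2) (if odd n then B1 else B0)
  end.

(** binary representation of n (most significant bit first; 0 is "0") *)
Definition bin (n : nat) : seq sym := bin_aux n.+1 n.

Definition enc_label (l : label) : seq sym :=
  match l with
  | Input n => B0 :: bin n
  | Gate o => B1 :: bin (op_code o)
  end.

Definition enc_gate (g : gate) : seq sym :=
  bin (gname g) ++ Sep :: enc_label (glabel g) ++ Sep ::
  flatten [seq bin p ++ [:: Sep] | p <- gpreds g] ++ [:: Sep].

Definition encode (C : circuit) : seq sym :=
  bin (cout C) ++ Sep :: flatten (map enc_gate (cgates C)).

Definition csize (C : circuit) : nat := size (encode C).

From Pilot Require Import Defs.
From mathcomp Require Import all_boot.
From mathcomp Require Import zify.

(* A set is constant from M if it contains either all numbers >= M or none
   of them.  Inputs {n} are constant from n+1, the Boolean operations keep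
   the threshold, and so does division (z*b >= M as soon as z >= M and
   b > 0); only addition raises it, from M to 2M.  Every gate contributes a
   factor >= 2 to 2^|C|, and an input gate n one > n, so the threshold of
   any gate is at most 2^|C|.  Multiplication must be excluded: the even
   numbers are constant from no threshold. *)

Definition const_from (M : nat) (A : nset) := forall z, M <= z -> (A z <-> A M).

Lemma const_from_leq {M M' A} : const_from M A -> M <= M' -> const_from M' A.
Proof. by move=> HA le z hz; rewrite (HA z) ?(HA M') //; lia. Qed.

Lemma const_from_of_transfer M A :
  (forall z w, M <= z -> M <= w -> A z -> A w) -> const_from M A.
Proof. by move=> H z hz; split; apply: H. Qed.

Lemma const_from_all {M A y} :
  const_from M A -> M <= y -> A y -> forall w, M <= w -> A w.
Proof. by move=> HA hy Ay w hw; apply/(HA w hw)/(HA y hy). Qed.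

Section ConstFromOperations.

Variables (M : nat) (A B : nset).
Hypotheses (HA : const_from M A) (HB : const_from M B).

Lemma const_fromC : const_from M (fun c => ~ A c).
Proof. by move=> z hz /=; rewrite (HA z hz). Qed.

Lemma const_fromU : const_from M (bin_sem Cup A B).
Proof. by move=> z hz /=; rewrite (HA z hz) (HB z hz). Qed.

Lemma const_fromI : const_from M (bin_sem Cap A B).
Proof. by move=> z hz /=; rewrite (HA z hz) (HB z hz). Qed.

Lemma const_from_plus : const_from (M + M) (bin_sem Plus A B).
Proof.
apply: const_from_of_transfer => z w hz hw [a [b [Aa [Bb ?]]]]; subst z.
have [leMa|ltaM] := leqP M a; last first.
  have leMb : M <= b by lia.
  exists a, (w - a); do !split => //; [apply: (const_from_all HB leMb Bb) | ]; lia.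
have allA := const_from_all HA leMa Aa.
have [lebw|ltwb] := leqP b (w - M).
  by exists (w - b), b; do !split => //; [apply: allA | ]; lia.
have leMb : M <= b by lia.
exists M, (w - M); do !split => //; [apply: allA | apply: (const_from_all HB leMb Bb) | ]; lia.
Qed.

Lemma const_from_div : const_from M (bin_sem Div A B).
Proof.
apply: const_from_of_transfer => z w hz hw [a [b [Aa [Bb [b0 ?]]]]]; subst a.
have allA := const_from_all HA (_ : M <= z * b) Aa.
by exists (w * b), b; do !split => //; apply: allA; nia.
Qed.

End ConstFromOperations.

Lemma const_from_input n : const_from n.+1 (fun c => c = n).
Proof. by move=> z hz; split=> ?; lia. Qed.

Fixpoint threshold (gs : seq gate) : nat :=
  match gs with
  | [::] => 0
  | g :: rest =>
      match glabel g with
      | Input n => maxn n.+1 (threshold rest)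
      | Gate Plus => threshold rest + threshold rest
      | _ => threshold rest
      end
  end.

Lemma val_const_from {O gs} :
  ~~ O Times -> all (gate_ok O) gs -> forall x, const_from (threshold gs) (Defs.val gs x).
Proof.
move=> nT; elim: gs => [|g rest IH] /=; first by move=> _ x z.
case/andP=> gok /IH{}IH x.
have IHle M : threshold rest <= M -> const_from M (Defs.val rest x).
  exact: const_from_leq.
case: eqP => _; last by case: (glabel g) => [n|[]]; apply: IHle; lia.
move: gok; rewrite /gate_ok /gate_sem.
case: (glabel g) => [n|[]] /= gok.
- by apply: const_from_leq (const_from_input n) _; lia.
- exact: const_fromU.
- exact: const_fromI.
- exact: const_fromC.
- exact: const_from_plus.
- by rewrite (negbTE nT) in gok.
- exact: const_from_div.
Qed.

Lemma ltn_exp2_bin_aux f n : n < f -> n < 2 ^ size (bin_aux f n).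
Proof.
elim: f n => [|f IH] n //= ltnf; case: ifP => lt2n; first by rewrite /=; lia.
have lt_half : n./2 < f by move: (leq_half_double n); lia.
have := IH _ lt_half; rewrite size_rcons expnS; have := odd_double_half n; case: (odd n) => /=; lia.
Qed.

Lemma ltn_exp2_bin n : n < 2 ^ size (bin n).
Proof. exact: ltn_exp2_bin_aux. Qed.

Lemma threshold_le_enc gs : threshold gs <= 2 ^ size (flatten (map enc_gate gs)).
Proof.
elim: gs => [|g rest IH] //=; rewrite size_cat expnD.
have ltlab : size (enc_label (glabel g)) < size (enc_gate g).
  by rewrite /enc_gate size_cat /= size_cat; lia.
have rest_gt0 : 0 < 2 ^ size (flatten (map enc_gate rest)) by rewrite expn_gt0.
have g_ge2 : 2 <= 2 ^ size (enc_gate g).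
  by rewrite -{1}(expn1 2) leq_pexp2l //; lia.
move: ltlab; case: (glabel g) => [n|[]] /= ltlab; try nia.
have bin_le : 2 ^ size (bin n) <= 2 ^ size (enc_gate g) by rewrite leq_pexp2l //; lia.
have bin_gt := ltn_exp2_bin n.
by rewrite geq_max; apply/andP; split; nia.
Qed.

Theorem corollary1 (O : pred op) (C : circuit) :
  (exists o, O o) -> (forall o, O o -> o <> Times) -> is_circuit O C ->
  forall z : nat, 2 ^ csize C + 1 <= z -> (I C z <-> I C (2 ^ csize C + 1)).
Proof.
move=> _ noTimes /and4P [_ _ _ gates_ok].
change (const_from (2 ^ csize C + 1) (I C)).
have nT : ~~ O Times by apply/negP => /noTimes.
have gates_le : 2 ^ size (flatten (map enc_gate (cgates C))) <= 2 ^ csize C.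
  by rewrite leq_pexp2l // /csize /encode size_cat /=; lia.
apply: const_from_leq (val_const_from nT gates_ok (cout C)) _.
by have := threshold_le_enc (cgates C); lia.
Qed.
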